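(* Let $g$ be a positive integer; suppose that for some $l$ the set $S_l$ contains a consecutive prospective prime pair with gap $g$, and let $j>l+2$. Let $(a,a+g)$ be a consecutive prospective prime pair with gap $g$ in $S_j$. Then for every $0\le m\le P_{j+2}-1$, the number of integers $m_{j+1}\in\{0,\dots,P_{j+1}-1\}$ such that, with $M=m_{j+1}P_j\#+mP_{j+1}\#$, both $a+M$ and $a+g+M$ are coprime to $P_{j+2}\#$ (i.e. the number of pairs generated from $(a,a+g)$ that lie in the subset $S_{j+2}^{(m)}$) is at least $P_{j+1}-4$.
   Context: $P_k$ denotes the $k$-th prime ($P_1=2$), $P_k\#=\prod_{i=1}^kP_i$. $S_k=\{N\in\mathbb{N}:5\le N\le4+P_k\#\}$ and $S_k^{(m)}=\{N:5+mP_{k-1}\#\le N\le 4+(m+1)P_{k-1}\#\}$ for $0\le m\le P_k-1$. A prospective prime in $S_k$ is an $N\in S_k$ coprime to $P_k\#$; prospective primes $a<b$ in $S_k$ are consecutive if no integer strictly between them is coprime to $P_k\#$; a consecutive prospective prime pair with gap $g$ is a pair $(a,a+g)$ of consecutive prospective primes. *)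

From mathcomp Require Import all_boot.
Set Implicit Arguments. Unset Strict Implicit. Unset Printing Implicit Defensive.

Lemma next_prime_ex n : exists p, (n < p) && prime p.
Proof. by case: (prime_above n) => p H1 H2; exists p; rewrite H1 H2. Qed.

Definition next_prime (n : nat) : nat := ex_minn (next_prime_ex n).

(* P k = k-th prime, P 1 = 2, P 2 = 3, ...; (P 0 = 1 is a dummy value) *)
Definition P (k : nat) : nat := iter k next_prime 1.

Definition primorial (k : nat) : nat := \prod_(1 <= i < k.+1) P i.

Definition inS (k N : nat) : bool := (5 <= N) && (N <= 4 + primorial k).

Definition prospective (k N : nat) : bool := inS k N && coprime N (primorial k).

Definition cons_pair (k a g : nat) : Prop :=
  0 < g /\ prospective k a /\ prospective k (a + g) /\
  (forall n, a < n < a + g -> ~~ coprime n (primorial k)).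

(* Since P_j# divides M, the numbers a + M and a + g + M stay coprime to P_j#,
   so coprimality to P_{j+2}# = P_j# P_{j+1} P_{j+2} only fails when one of the
   primes P_{j+1}, P_{j+2} divides one of them.  Both primes are coprime to P_j#
   and at least P_{j+1}, so x |-> c + x P_j# is injective modulo each of them on
   0 <= x < P_{j+1}: each of these four divisibility events occurs for at most
   one value of m_{j+1}. *)

From mathcomp Require Import all_boot.

Lemma next_primeP n : n < next_prime n /\ prime (next_prime n).
Proof. by rewrite /next_prime; case: ex_minnP => p /andP[]. Qed.

Lemma P_prime k : 0 < k -> prime (P k).
Proof. by case: k => // k _; have [] := next_primeP (P k). Qed.

Lemma P_mono : {homo P : i k / i < k}.
Proof.
apply: homo_ltn => [? ? ?|i]; first exact: ltn_trans.
by have [] := next_primeP (P i).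
Qed.

Lemma primorialS k : primorial k.+1 = primorial k * P k.+1.
Proof. by rewrite /primorial big_nat_recr. Qed.

Lemma coprime_P_primorial k n : k < n -> coprime (P n) (primorial k).
Proof.
elim: k => [|k IHk] lt_kn; first by rewrite /primorial big_geq ?coprimen1.
rewrite primorialS coprimeMr IHk 1?ltnW // andTb.
have n_gt0 : 0 < n by apply: leq_ltn_trans lt_kn.
by rewrite prime_coprime ?P_prime // dvdn_prime2 ?P_prime // gtn_eqF ?P_mono.
Qed.

Lemma coprime_primorialSS k n :
  coprime n (primorial k.+2) =
  [&& coprime n (primorial k), ~~ (P k.+1 %| n) & ~~ (P k.+2 %| n)].
Proof.
rewrite primorialS primorialS !coprimeMr -andbA.
by rewrite ![coprime n (P _)]coprime_sym !(prime_coprime _ (P_prime _ _)).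
Qed.

Lemma coprimeDMl c x d : coprime (c + x * d) d = coprime c d.
Proof. by rewrite coprime_sym addnC /coprime gcdnMDl -/(coprime d c) coprime_sym. Qed.

Lemma leq_count_predU {T : Type} (a b : pred T) s :
  count (predU a b) s <= count a s + count b s.
Proof. by rewrite -count_predUI leq_addr. Qed.

Lemma eqn_mod_affine p c d x y : coprime p d -> x < p -> y < p ->
  c + x * d = c + y * d %[mod p] -> x = y.
Proof.
move=> cpd; wlog le_xy : x y / x <= y => [hwlog ltxp ltyp Exy|_ ltyp].
  by case: (leqP x y) => [|/ltnW] le; [|symmetry]; apply: hwlog.
move/esym/eqP; rewrite eqn_mod_dvd ?leq_add2l ?leq_mul2r ?le_xy ?orbT //.
rewrite subnDl -mulnBl Gauss_dvdl // /dvdn modn_small; last first.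
  exact: leq_ltn_trans (leq_subr _ _) ltyp.
by rewrite subn_eq0 => le_yx; apply/eqP; rewrite eqn_leq le_xy.
Qed.

Lemma count_dvdn_affine_le1 p c d q : coprime p d -> q <= p ->
  count (fun x => p %| c + x * d) (iota 0 q) <= 1.
Proof.
move=> cpd le_qp.
have uniq_res : uniq [seq (c + x * d) %% p | x <- iota 0 q].
  rewrite map_inj_in_uniq ?iota_uniq // => x y.
  rewrite !mem_iota !add0n => lt_xq lt_yq.
  exact: eqn_mod_affine cpd (leq_trans lt_xq le_qp) (leq_trans lt_yq le_qp).
by rewrite -[count _ _](count_map _ (pred1 0)) count_uniq_mem ?leq_b1.
Qed.

Lemma count_coprime_shifted_pair k c1 c2 :
  coprime c1 (primorial k) -> coprime c2 (primorial k) ->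
  P k.+1 - 4 <=
  count (fun x => coprime (c1 + x * primorial k) (primorial k.+2) &&
                  coprime (c2 + x * primorial k) (primorial k.+2))
        (iota 0 (P k.+1)).
Proof.
move=> c1D c2D; set q := P k.+1; set r := P k.+2; set d := primorial k.
have qd : coprime q d by apply: coprime_P_primorial.
have rd : coprime r d by apply: coprime_P_primorial; apply: ltnW.
have le_qr : q <= r by apply/ltnW/P_mono.
pose hit p c := fun x => p %| c + x * d.
pose bad := predU (predU (hit q c1) (hit r c1)) (predU (hit q c2) (hit r c2)).
rewrite (eq_count (a2 := predC bad)) => [|x]; last first.
  rewrite /= !coprime_primorialSS !coprimeDMl c1D c2D.
  by rewrite /= !negb_or !andbA.
have bad_le4 : count bad (iota 0 q) <= 4.
  apply: leq_trans (leq_count_predU _ _ _) _; rewrite -[4]/(2 + 2).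
  apply: leq_add; apply: leq_trans (leq_count_predU _ _ _) _;
    by apply: (@leq_add _ _ 1 1); apply: count_dvdn_affine_le1.
by rewrite -{1}[q](size_iota 0) -(count_predC bad) leq_subLR leq_add2r.
Qed.

Theorem lemma5 (g : nat) (hg : 0 < g)
  (j : nat) (hl : exists l, (exists b, cons_pair l b g) /\ l + 2 < j)
  (a : nat) (ha : cons_pair j a g) :
  forall m, m < P j.+2 ->
    P j.+1 - 4 <=
    count (fun mj =>
             let M := mj * primorial j + m * primorial j.+1 in
             coprime (a + M) (primorial j.+2) &&
             coprime (a + g + M) (primorial j.+2))
          (iota 0 (P j.+1)).
Proof.
move=> m _; case: ha => _ [/andP[_ ca] [/andP[_ cag] _]].
set c := m * primorial j.+1.
have cD b : coprime b (primorial j) -> coprime (b + c) (primorial j).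
  by rewrite /c primorialS [primorial j * _]mulnC mulnA coprimeDMl.
rewrite (eq_count (a2 := fun x =>
  coprime (a + c + x * primorial j) (primorial j.+2) &&
  coprime (a + g + c + x * primorial j) (primorial j.+2))).
  exact: count_coprime_shifted_pair (cD _ ca) (cD _ cag).
by move=> x /=; rewrite ![_ + c + _]addnAC -![_ + x * _ + c]addnA.
Qed.
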